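(* The metric space $(\mathcal{GH}_1,d_{\mathrm{GH}})$ of (isometry classes of) compact metric pairs is separable.
   Context: A metric pair $(X,A)$ is a metric space $(X,d_X)$ with a non-empty closed subset $A\subset X$; it is compact if $X$ is compact; pairs are identified up to isometries of the spaces mapping the subsets onto each other. For subsets $X,Y$ of a metric space $(Z,\delta)$, $d^\delta_{\mathrm H}((X,A),(Y,B)):=d^\delta_{\mathrm H}(X,Y)+d^\delta_{\mathrm H}(A,B)$ (usual Hausdorff distances). A metric $\delta$ on $X\sqcup Y$ is admissible if it restricts to $d_X$ on $X$ and $d_Y$ on $Y$; the Gromov--Hausdorff distance of compact metric pairs is $d_{\mathrm{GH}}((X,A),(Y,B)):=\inf_\delta d^\delta_{\mathrm H}((X,A),(Y,B))$ over admissible $\delta$. $\mathcal{GH}_1$ is the space of compact metric pairs with this distance. *)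

From HB Require Import structures.
From mathcomp Require Import all_boot all_order all_algebra.
From mathcomp Require Import all_classical all_reals.
From mathcomp Require Import ereal Rstruct.

Set Implicit Arguments.
Unset Strict Implicit.
Unset Printing Implicit Defensive.
Import Order.TTheory GRing.Theory Num.Theory.
Local Open Scope classical_set_scope.
Local Open Scope ring_scope.

Definition Rl := Rdefinitions.R.

Definition is_metric (T : Type) (d : T -> T -> Rl) : Prop :=
  (forall x, d x x = 0) /\
  (forall x y, d x y = 0 -> x = y) /\
  (forall x y, d x y = d y x) /\
  (forall x y z, d x z <= d x y + d y z).

Definition mopen (T : Type) (d : T -> T -> Rl) (U : set T) : Prop :=
  forall x, U x -> exists r : Rl, 0 < r /\ forall y, d x y < r -> U y.

Definition mclosed (T : Type) (d : T -> T -> Rl) (A : set T) : Prop :=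
  mopen d (~` A).

Definition mcompact (T : Type) (d : T -> T -> Rl) : Prop :=
  forall (I : Type) (U : I -> set T),
    (forall i, mopen d (U i)) -> (forall x, exists i, U i x) ->
    exists (n : nat) (f : nat -> I), forall x, exists k : nat, (k < n)%N /\ U (f k) x.

Record CMPair := {
  cmp_carrier : Type;
  cmp_dist : cmp_carrier -> cmp_carrier -> Rl;
  cmp_metric : is_metric cmp_dist;
  cmp_compact : mcompact cmp_dist;
  cmp_sub : set cmp_carrier;
  cmp_sub_nonempty : exists a, cmp_sub a;
  cmp_sub_closed : mclosed cmp_dist cmp_sub }.

Definition hausdorff (Z : Type) (delta : Z -> Z -> Rl) (S T : set Z) : \bar Rl :=
  Order.max
    (ereal_sup [set ereal_inf [set (delta s t)%:E | t in T] | s in S])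
    (ereal_sup [set ereal_inf [set (delta s t)%:E | s in S] | t in T]).

Definition admissible (P Q : CMPair)
    (delta : (cmp_carrier P + cmp_carrier Q)%type -> (cmp_carrier P + cmp_carrier Q)%type -> Rl) : Prop :=
  is_metric delta /\
  (forall x x', delta (inl x) (inl x') = cmp_dist x x') /\
  (forall y y', delta (inr y) (inr y') = cmp_dist y y').

Definition dGH (P Q : CMPair) : \bar Rl :=
  ereal_inf [set (hausdorff delta [set inl x | x in [set: cmp_carrier P]]
                                  [set inr y | y in [set: cmp_carrier Q]]
                  + hausdorff delta [set inl a | a in @cmp_sub P]
                                    [set inr b | b in @cmp_sub Q])%E
            | delta in @admissible P Q].

(* separability of (GH_1, d_GH): a countable (sequence-indexed) family is dense.
   Since d_GH is isometry-invariant, this is separability of the quotient. *)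
Definition GH1_separable : Prop :=
  exists D : nat -> CMPair,
    forall (P : CMPair) (eps : Rl), 0 < eps -> exists n, (dGH P (D n) < eps%:E)%E.

From mathcomp Require Import all_boot all_order all_algebra.
From mathcomp Require Import all_classical all_reals.
From mathcomp Require Import ereal Rstruct lra.

(** Every compact pair (X, A) is close to a finite pair: take a finite
    e-net of X together with a finite e-net of A lying inside A, and replace
    the distances between net points by numbers on the grid (1/N)Z that
    exceed them by between 2/N and 3/N off the diagonal; the margin 2/N
    keeps the triangle inequality.  Gluing X to this finite space by
    d(x, i) = d(x, p_i) + 3/N gives a Gromov--Hausdorff bound of order
    e + 3/N.  A finite pair with grid distances is described by finitely
    many integers, so these pairs form a countable family. *)

Set Implicit Arguments.
Unset Strict Implicit.
Unset Printing Implicit Defensive.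
Import Order.TTheory GRing.Theory Num.Theory.
Local Open Scope classical_set_scope.
Local Open Scope ring_scope.

Section MetricSpace.
Variables (T : Type) (d : T -> T -> Rl).
Hypothesis d_metric : is_metric d.

Lemma metric_ge0 x y : 0 <= d x y.
Proof.
have [d0 [_ [dC dtri]]] := d_metric.
by have := dtri x y x; rewrite d0 (dC y x); lra.
Qed.

Lemma mopen_ball x e : mopen d [set y | d x y < e].
Proof.
have [_ [_ [_ dtri]]] := d_metric.
move=> y /= dxy; exists (e - d x y); split=> [|z dyz /=]; first lra.
by have := dtri x y z; lra.
Qed.

Lemma mclosed_setT : mclosed d setT.
Proof. by move=> x /(_ I). Qed.

Lemma mcompact_closed_net (A : set T) (a0 : T) (e : Rl) :
  mcompact d -> mclosed d A -> A a0 -> 0 < e ->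
  exists (n : nat) (f : nat -> T),
    (forall k, A (f k)) /\ forall a, A a -> exists k, (k < n)%N /\ d (f k) a < e.
Proof.
move=> d_compact A_closed Aa0 e0.
pose U (o : option {a : T | A a}) : set T :=
  if o is Some a then [set y | d (sval a) y < e] else ~` A.
have U_open o : mopen d (U o) by case: o => [a|]; [exact: mopen_ball | exact: A_closed].
have U_cover x : exists o, U o x.
  case: (pselect (A x)) => Ax; last by exists None.
  by exists (Some (exist _ x Ax)); rewrite /= (proj1 d_metric).
have [n [g g_cover]] := d_compact _ U U_open U_cover.
exists n, (fun k => if g k is Some a then sval a else a0); split.
  by move=> k; case: (g k) => [[]|].
move=> a Aa; have [k [kn Uka]] := g_cover a; exists k; split=> //.
by move: Uka; case: (g k) => [[]|] //= /(_ Aa).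
Qed.

End MetricSpace.

Lemma finite_mopen (T : finType) (d : T -> T -> Rl) :
  is_metric d -> forall U : set T, mopen d U.
Proof.
move=> d_metric U x Ux.
exists (\big[Order.min/1]_(y | y != x) d x y); split.
  apply: lt_bigmin => // y yx; rewrite lt_neqAle metric_ge0 // andbT.
  apply/eqP => /esym /(proj1 (proj2 d_metric)) xy.
  by rewrite xy eqxx in yx.
move=> y; case: (eqVneq y x) => [-> //| yx].
by have := @bigmin_le_cond _ _ _ 1 y (fun z => z != x) (d x) yx; lra.
Qed.

Lemma finite_mcompact (T : finType) (d : T -> T -> Rl) : inhabited T -> mcompact d.
Proof.
move=> [x0] I U _ U_cover; have [g g_cover] := choice U_cover.
exists #|T|, (fun k => g (nth x0 (enum T) k)) => x.
exists (index x (enum T)); split; first by rewrite cardE index_mem mem_enum.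
by rewrite nth_index ?mem_enum.
Qed.

Lemma hausdorff_le (Z : Type) (delta : Z -> Z -> Rl) (S T : set Z) (b : Rl) :
  (forall s, S s -> exists2 t, T t & delta s t <= b) ->
  (forall t, T t -> exists2 s, S s & delta s t <= b) ->
  (hausdorff delta S T <= b%:E)%E.
Proof.
move=> ST TS; rewrite /hausdorff ge_max.
apply/andP; split; apply: ge_ereal_sup => _ [s Ss <-].
  have [t Tt le_b] := ST s Ss; apply: ge_ereal_inf.
  by exists (delta s t)%:E; [exists t | rewrite lee_fin].
have [t Tt le_b] := TS s Ss; apply: ge_ereal_inf.
by exists (delta t s)%:E; [exists t | rewrite lee_fin].
Qed.

Section Gluing.
Variables (X Y : Type) (dX : X -> X -> Rl) (dY : Y -> Y -> Rl).
Variables (p : Y -> X) (r : Rl).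
Hypotheses (dX_metric : is_metric dX) (dY_metric : is_metric dY).
Hypothesis p_distortion :
  forall y y', dX (p y) (p y') <= dY y y' <= dX (p y) (p y') + r.

Definition glue_dist (u v : X + Y) : Rl :=
  match u, v with
  | inl x, inl x' => dX x x'
  | inr y, inr y' => dY y y'
  | inl x, inr y | inr y, inl x => dX x (p y) + r
  end.

Lemma glue_metric : 0 < r -> is_metric glue_dist.
Proof.
move=> r_gt0.
have [dX0 [dX_eq [dXC dX_tri]]] := dX_metric.
have [dY0 [dY_eq [dYC dY_tri]]] := dY_metric.
have dX_ge0 := metric_ge0 dX_metric.
have lower y y' : dX (p y) (p y') <= dY y y' by case/andP: (p_distortion y y').
have upper y y' : dY y y' <= dX (p y) (p y') + r by case/andP: (p_distortion y y').
split; first by case.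
split.
  case=> [x|y] [x'|y'] /= h.
  - by rewrite (dX_eq _ _ h).
  - by exfalso; have := dX_ge0 x (p y'); lra.
  - by exfalso; have := dX_ge0 x' (p y); lra.
  - by rewrite (dY_eq _ _ h).
split; first by case=> [x|y] [x'|y'] /=; [exact: dXC | | | exact: dYC].
case=> [x|y] [x'|y'] [x''|y''] /=.
- exact: dX_tri.
- by have := dX_tri x x' (p y''); lra.
- by have := dX_tri x (p y') x''; have := dXC (p y') x''; lra.
- by have := dX_tri x (p y') (p y''); have := lower y' y''; lra.
- by have := dX_tri x'' x' (p y); have := dXC x'' x'; lra.
- by have := upper y y''; have := dX_tri (p y) x' (p y''); have := dXC (p y) x'; lra.
- by have := dX_tri x'' (p y') (p y); have := dXC (p y') (p y); have := lower y y'; lra.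
- exact: dY_tri.
Qed.

End Gluing.

Lemma dGH_le_glue (P Q : CMPair) (p : cmp_carrier Q -> cmp_carrier P) (r e : Rl) :
  0 < r -> 0 <= e ->
  (forall y y', cmp_dist (p y) (p y') <= cmp_dist y y' <= cmp_dist (p y) (p y') + r) ->
  (forall x, exists y, cmp_dist (p y) x <= e) ->
  (forall a, cmp_sub a -> exists2 b, cmp_sub b & cmp_dist (p b) a <= e) ->
  (forall b, cmp_sub b -> cmp_sub (p b)) ->
  (dGH P Q <= ((e + r) + (e + r))%:E)%E.
Proof.
move=> r_gt0 e_ge0 p_distortion p_dense p_dense_sub p_sub.
have dP0 := proj1 (cmp_metric P); have dPC := proj1 (proj2 (proj2 (cmp_metric P))).
pose delta := glue_dist (@cmp_dist P) (@cmp_dist Q) p r.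
apply: ge_ereal_inf; exists (hausdorff delta [set inl x | x in [set: cmp_carrier P]]
                                     [set inr y | y in [set: cmp_carrier Q]]
    + hausdorff delta [set inl a | a in @cmp_sub P] [set inr b | b in @cmp_sub Q])%E.
  exists delta => //; split; last by split.
  exact: glue_metric (cmp_metric P) (cmp_metric Q) p_distortion r_gt0.
rewrite EFinD; apply: leeD; apply: hausdorff_le.
- move=> _ [x _ <-]; have [y dyx] := p_dense x.
  by exists (inr y); [exists y | rewrite /= dPC; lra].
- by move=> _ [y _ <-]; exists (inl (p y)); [exists (p y) | rewrite /= dP0; lra].
- move=> _ [a Aa <-]; have [b Bb dba] := p_dense_sub a Aa.
  by exists (inr b); [exists b | rewrite /= dPC; lra].
- move=> _ [b Bb <-].
  by exists (inl (p b)); [exists (p b); first exact: p_sub | rewrite /= dP0; lra].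
Qed.

Lemma perturbed_metric (X : Type) (T : eqType) (d : X -> X -> Rl) (p : T -> X)
    (f : T -> T -> Rl) (a b : Rl) :
  is_metric d -> 0 < a -> b <= 2 * a ->
  (forall i, f i i = 0) -> (forall i j, f i j = f j i) ->
  (forall i j, i != j -> d (p i) (p j) + a < f i j <= d (p i) (p j) + b) ->
  is_metric f.
Proof.
move=> d_metric a_gt0 b_le f0 fC f_near.
have d_ge0 := metric_ge0 d_metric.
have f_gt0 i j : i != j -> 0 < f i j.
  by move=> ij; case/andP: (f_near i j ij); have := d_ge0 (p i) (p j); lra.
have f_ge0 i j : 0 <= f i j.
  by case: (eqVneq i j) => [->|ij]; [rewrite f0 | exact/ltW/f_gt0].
split=> //; split.
  move=> i j fij; apply/eqP; apply: contraT => ij.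
  by have := f_gt0 i j ij; rewrite fij ltxx.
split=> // i j k.
case: (eqVneq i k) => [->|ik]; first by rewrite f0; have := f_ge0 k j; have := f_ge0 j k; lra.
case: (eqVneq i j) => [->|ij]; first by rewrite f0 add0r.
case: (eqVneq j k) => [->|jk]; first by rewrite f0 addr0.
case/andP: (f_near i k ik) => _; case/andP: (f_near i j ij) => + _.
case/andP: (f_near j k jk) => + _.
by have := (proj2 (proj2 (proj2 d_metric))) (p i) (p j) (p k); lra.
Qed.

Lemma floor_round_bounds (N D : Rl) : 0 < N ->
  D + 2 / N < (Num.floor (N * D) + 3)%:~R / N <= D + 3 / N.
Proof.
move=> N_gt0; have := floor_le (N * D); have := floorD1_gt (N * D).
rewrite !intrD => lt_floor le_floor.
by rewrite ltr_pdivlMr // ler_pdivrMr // !mulrDl !divfK ?gt_eqF //; apply/andP; split; lra.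
Qed.

(* A code (m, N, s, b) describes the pair on 'I_m with distance s_ij / N off
   the diagonal and subset {i | i \in b}.  Codes that do not describe a
   metric pair with nonempty subset are sent to the one-point pair. *)
Definition code := (nat * nat * seq (seq int) * seq nat)%type.

Definition code_size (c : code) : nat := c.1.1.1.
Definition code_denom (c : code) : nat := c.1.1.2.
Definition code_numer (c : code) : seq (seq int) := c.1.2.
Definition code_subidx (c : code) : seq nat := c.2.

Definition code_dist (c : code) (i j : 'I_(code_size c)) : Rl :=
  if i == j then 0 else (nth 0 (nth [::] (code_numer c) i) j)%:~R / (code_denom c)%:R.

Definition code_sub (c : code) : set 'I_(code_size c) := [set i | val i \in code_subidx c].

Definition code_valid (c : code) : Prop :=
  is_metric (@code_dist c) /\ exists a, @code_sub c a.

Definition point_dist (x y : unit) : Rl := 0.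

Lemma point_metric : is_metric point_dist.
Proof.
split=> //; split; first by do 2 case.
by split=> // *; rewrite /point_dist addr0.
Qed.

Definition point_pair : CMPair :=
  @Build_CMPair unit point_dist point_metric (finite_mcompact (inhabits tt))
    setT (ex_intro _ tt I) (mclosed_setT point_dist).

Definition code_pair (c : code) : CMPair :=
  match pselect (code_valid c) with
  | left c_valid =>
      @Build_CMPair 'I_(code_size c) (@code_dist c) (proj1 c_valid)
        (finite_mcompact (let: ex_intro a _ := proj2 c_valid in inhabits a))
        (@code_sub c) (proj2 c_valid) (@finite_mopen _ _ (proj1 c_valid) (~` @code_sub c))
  | right _ => point_pair
  end.

Definition code_pair_seq (n : nat) : CMPair :=
  if unpickle n is Some c then code_pair c else point_pair.

Lemma code_pair_seq_pickle (c : code) : code_pair_seq (pickle c) = code_pair c.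
Proof. by rewrite /code_pair_seq pickleK. Qed.

Definition round_code (X : Type) (d : X -> X -> Rl) (p : nat -> X) (m N : nat)
    (b : seq nat) : code :=
  (m, N, [seq [seq Num.floor (N%:R * d (p i) (p j)) + 3 | j <- iota 0 m] | i <- iota 0 m], b).

Section RoundCode.
Variables (X : Type) (d : X -> X -> Rl) (p : nat -> X) (m N : nat) (b : seq nat).
Hypotheses (d_metric : is_metric d) (N_gt0 : (0 < N)%N).

Local Notation c := (round_code d p m N b).

Lemma round_code_dist (i j : 'I_m) : i != j ->
  @code_dist c i j = (Num.floor (N%:R * d (p i) (p j)) + 3)%:~R / N%:R.
Proof.
move=> ij; rewrite /code_dist (negbTE ij) /code_numer /=.
by rewrite (nth_map 0%N) ?size_iota // nth_iota // (nth_map 0%N) ?size_iota // nth_iota.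
Qed.

Lemma round_code_near (i j : 'I_m) : i != j ->
  d (p i) (p j) + 2 / N%:R < @code_dist c i j <= d (p i) (p j) + 3 / N%:R.
Proof. by move=> ij; rewrite round_code_dist //; apply: floor_round_bounds; rewrite ltr0n. Qed.

Lemma round_code_metric : is_metric (@code_dist c).
Proof.
have N_pos : (0 : Rl) < N%:R by rewrite ltr0n.
apply: (perturbed_metric (p := fun i : 'I_m => p i)) d_metric _ _ _ _ round_code_near.
- by rewrite divr_gt0.
- by rewrite mulrA ler_pM2r ?invr_gt0 //; lra.
- by move=> i; rewrite /code_dist eqxx.
- move=> i j; case: (eqVneq i j) => [-> //|ij].
  by rewrite round_code_dist // round_code_dist 1?eq_sym // (proj1 (proj2 (proj2 d_metric)) (p i)).
Qed.

Lemma round_code_distortion (i j : 'I_m) :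
  d (p i) (p j) <= @code_dist c i j <= d (p i) (p j) + 3 / N%:R.
Proof.
have d0 := proj1 d_metric; have N_pos : (0 : Rl) < N%:R by rewrite ltr0n.
case: (eqVneq i j) => [->|ij]; last first.
  have : 0 < 2 / (N%:R : Rl) by rewrite divr_gt0.
  by case/andP: (round_code_near ij); lra.
by rewrite /code_dist eqxx d0 lexx add0r divr_ge0 ?ler0n.
Qed.

End RoundCode.

Lemma dGH_code_pair_le (P : CMPair) (c : code) (p : 'I_(code_size c) -> cmp_carrier P)
    (r e : Rl) :
  code_valid c -> 0 < r -> 0 <= e ->
  (forall i j, cmp_dist (p i) (p j) <= code_dist i j <= cmp_dist (p i) (p j) + r) ->
  (forall x, exists i, cmp_dist (p i) x <= e) ->
  (forall a, cmp_sub a -> exists2 i, code_sub i & cmp_dist (p i) a <= e) ->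
  (forall i, code_sub i -> cmp_sub (p i)) ->
  (dGH P (code_pair c) <= ((e + r) + (e + r))%:E)%E.
Proof.
move=> c_valid r_gt0 e_ge0 p_distortion p_dense p_dense_sub p_sub.
by rewrite /code_pair; case: pselect => // ?; exact: dGH_le_glue.
Qed.

Lemma exists_code_pair_near (P : CMPair) (eps : Rl) :
  0 < eps -> exists c, (dGH P (code_pair c) < eps%:E)%E.
Proof.
move=> eps_gt0; have [a0 Aa0] := cmp_sub_nonempty P.
have d_metric := cmp_metric P; have d_compact := @cmp_compact P.
pose e := eps / 4; have e_gt0 : 0 < e by rewrite divr_gt0.
have [n1 [f1 [_ net_X]]] :=
  mcompact_closed_net d_metric d_compact (mclosed_setT _) (I : setT a0) e_gt0.
have [n2 [f2 [f2_A net_A]]] :=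
  mcompact_closed_net d_metric d_compact (@cmp_sub_closed P) Aa0 e_gt0.
have n1_lt : (n1 < n1 + n2)%N.
  by have [k [kn _]] := net_A a0 Aa0; rewrite -{1}[n1]addn0 ltn_add2l (leq_ltn_trans _ kn).
pose N := Num.Def.archi_bound (3 / e).
have N_pos : (0 : Rl) < N%:R.
  by apply: le_lt_trans (archi_boundP _); rewrite divr_ge0 // ltW.
have r_lt_e : 3 / N%:R < e.
  rewrite ltr_pdivrMr // mulrC -ltr_pdivrMr //; exact/archi_boundP/divr_ge0/ltW.
have N_gt0 : (0 < N)%N by rewrite -(ltr0n Rl).
pose pt k := if (k < n1)%N then f1 k else f2 (k - n1)%N.
pose c := round_code (@cmp_dist P) pt (n1 + n2) N (iota n1 n2).
exists c.
apply: (@le_lt_trans _ _ ((e + 3 / N%:R) + (e + 3 / N%:R))%:E); last first.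
  by rewrite lte_fin; move: r_lt_e; rewrite /e; lra.
apply: (@dGH_code_pair_le P c (fun i => pt i)) (ltW e_gt0) _ _ _ _.
- split; first exact: round_code_metric.
  by exists (Ordinal n1_lt); rewrite /code_sub /= mem_iota leqnn.
- exact: divr_gt0.
- exact: round_code_distortion.
- move=> x; have [k [kn dkx]] := net_X x I.
  by exists (Ordinal (ltn_addr n2 kn)); rewrite /= /pt kn ltW.
- move=> a Aa; have [k [kn dka]] := net_A a Aa.
  have k_lt : (n1 + k < n1 + n2)%N by rewrite ltn_add2l.
  exists (Ordinal k_lt); first by rewrite /code_sub /= mem_iota leq_addr ltn_add2l.
  by rewrite /= /pt ltnNge leq_addr /= addKn ltW.
- move=> i; rewrite /code_sub /= mem_iota /pt => /andP [+ _].
  by rewrite leqNgt => /negbTE ->.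
Qed.

Theorem theorem3p7 : GH1_separable.
Proof.
exists code_pair_seq => P eps eps_gt0.
have [c near_c] := exists_code_pair_near P eps_gt0.
by exists (pickle c); rewrite code_pair_seq_pickle.
Qed.
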